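(* Let $Y$ be a variable. For all positive integers $n$, $$\det_{0\le i,j\le n-1}\left(Y+2^{-2\lceil(i+j+1)/2\rceil}\binom{2\lceil(i+j+1)/2\rceil}{\lceil(i+j+1)/2\rceil}\right)=(-1)^{\binom n2}2^{-n^2}\big(2\lceil n/2\rceil Y+1\big).$$ *)

From mathcomp Require Import all_boot all_algebra.
Set Implicit Arguments. Unset Strict Implicit. Unset Printing Implicit Defensive.
Import GRing.Theory Num.Theory.
Local Open Scope ring_scope.

Definition ceilhalf (k : nat) : nat := k.+1./2.

Definition cbin (m : nat) : rat := ('C(m.*2, m))%:R / (2%:R ^+ m.*2).

Definition entry (i j : nat) : {poly rat} := 'X + (cbin (ceilhalf (i + j).+1))%:P.

From mathcomp Require Import all_boot all_algebra.
From mathcomp Require Import ring zify.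

Set Implicit Arguments.
Unset Strict Implicit.
Unset Printing Implicit Defensive.
Import GRing.Theory Num.Theory.
Local Open Scope ring_scope.

(* The constant part H = (moment (i + j)) is a Hankel matrix with an explicit
   factorization H = L D L^T, where D = diag((-1)^k 2^(-2k-1)) and L is
   unitriangular with binomial entries.  The rows of L satisfy a three-term
   recurrence in the column index whose adjoint is intertwined with it by D;
   hence (L D L^T)_(i+1,j) = (L D L^T)_(i,j+1), so L D L^T is Hankel and is
   determined by the first column of L.  The all-ones matrix is (L z)(L z)^T
   for z = (1, 0, 1/4, 0, 1/16, ...), a fixed point of the adjoint recurrence,
   so the matrix is L D (1 + Y D^-1 z z^T) L^T and the matrix determinant
   lemma gives det D * (1 + Y z^T D^-1 z). *)

Lemma det_1Dmul (R : comNzRingType) n (u : 'cV[R]_n) (v : 'rV[R]_n) :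
  \det (1%:M + u *m v) = 1 + (v *m u) 0 0.
Proof.
pose Lo := block_mx (1%:M : 'M[R]_n) 0 v (1%:M : 'M_1).
pose Up := block_mx (1%:M + u *m v) u 0 (1%:M : 'M_1).
pose Lo' := block_mx (1%:M : 'M[R]_n) 0 (- v) (1%:M : 'M_1).
have LUL : Lo *m Up *m Lo' = block_mx 1%:M u 0 (1%:M + v *m u).
  rewrite !mulmx_block !mul1mx !mulmx1 !mul0mx !mulmx0 !addr0 !add0r.
  rewrite mulmxDl mulmxDr mul1mx mulmxN mulmxA mulmxN.
  congr block_mx; first by rewrite addrK.
    by rewrite mulmx1 -opprD [v *m u *m v + v]addrC subrr.
  by rewrite addrC.
have := congr1 determinant LUL.
rewrite !det_mulmx det_lblock det_ublock det_lblock det_ublock !det1 !mulr1 !mul1r.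
by rewrite det_mx11 !mxE.
Qed.

Lemma expfzSr (F : fieldType) (x : F) (e : int) : x != 0 -> x ^ (e + 1) = x ^ e * x.
Proof. by move=> x_neq0; rewrite expfzDr // expr1z. Qed.

Lemma exp2_double (R : pzSemiRingType) n : (2 : R) ^+ n.*2 = 4 ^+ n.
Proof. by rewrite -mul2n exprM -natrX. Qed.

Lemma sign_double (R : pzRingType) n : (-1 : R) ^+ n.*2 = 1.
Proof. by rewrite -signr_odd odd_double. Qed.

Lemma sign_doubleS (R : pzRingType) n : (-1 : R) ^+ n.*2.+1 = -1.
Proof. by rewrite -signr_odd /= odd_double. Qed.

Lemma even_or_odd n : {r | n = r.*2} + {r | n = r.*2.+1}.
Proof.
case n_odd: (odd n); [right | left]; exists n./2;
  by rewrite -[n in LHS]odd_double_half n_odd.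
Qed.

Lemma sum_odd n : (\sum_(k < n) k.*2.+1)%N = (n ^ 2)%N.
Proof. by elim: n => [|n IH]; rewrite ?big_ord0 // big_ord_recr /= IH; lia. Qed.

Lemma binSS n k : 'C(n.+2, k.+2) = ('C(n, k.+2) + 2 * 'C(n, k.+1) + 'C(n, k))%N.
Proof. rewrite !binS; lia. Qed.

Lemma bin_odd_mid r : 'C(r.*2.+1, r) = 'C(r.*2.+1, r.+1).
Proof. by rewrite -bin_sub -?addnn; [congr 'C(_, _) | ]; lia. Qed.

Definition moment (m : nat) : rat := cbin (ceilhalf m.+1).

Definition shiftr (f : nat -> rat) (k : nat) : rat := if k is k'.+1 then f k' else 0.

Definition rowS (f : nat -> rat) (k : nat) : rat :=
  shiftr f k + (-1) ^+ k * f k - f k.+1 / 4.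

Definition rowS_adj (g : nat -> rat) (k : nat) : rat :=
  g k.+1 + (-1) ^+ k * g k - shiftr g k / 4.

Definition dot (n : nat) (f g : nat -> rat) : rat := \sum_(k < n) f k * g k.

Lemma eq_dotr n f g g' : g =1 g' -> dot n f g = dot n f g'.
Proof. by move=> eq_g; apply: eq_bigr => k _; rewrite eq_g. Qed.

Lemma dot_rowS n f g : (forall k, (n <= k.+1)%N -> f k = 0) ->
  dot n (rowS f) g = dot n f (rowS_adj g).
Proof.
case: n => [|n] f_supp; first by rewrite /dot !big_ord0.
have shiftr_l : \sum_(k < n.+1) shiftr f k * g k = \sum_(k < n.+1) f k * g k.+1.
  rewrite big_ord_recl big_ord_recr /= f_supp // !mul0r addr0 add0r.
  by apply: eq_bigr => k _; rewrite /bump add1n.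
have shiftr_r : \sum_(k < n.+1) f k.+1 * g k = \sum_(k < n.+1) f k * shiftr g k.
  rewrite big_ord_recr big_ord_recl /= f_supp // mul0r mulr0 addr0 add0r.
  by apply: eq_bigr => k _; rewrite /bump add1n.
rewrite /dot /rowS /rowS_adj (eq_bigr (fun k : 'I_n.+1 =>
  shiftr f k * g k + (-1) ^+ k * f k * g k - f k.+1 * g k / 4)) => [|k _]; last by ring.
rewrite [RHS](eq_bigr (fun k : 'I_n.+1 =>
  f k * g k.+1 + (-1) ^+ k * f k * g k - f k * shiftr g k / 4)) => [|k _]; last by ring.
by rewrite !sumrB !big_split /= -!mulr_suml shiftr_l shiftr_r.
Qed.

Definition Ddiag (k : nat) : rat := (-1) ^+ k / 2 ^+ k.*2.+1.

Definition Linv_ones (k : nat) : rat := (~~ odd k)%:R / 2 ^+ k.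

Lemma Ddiag_neq0 k : Ddiag k != 0.
Proof. by rewrite /Ddiag mulf_neq0 ?signr_eq0 // invr_eq0 expf_neq0. Qed.

Lemma DdiagS k : Ddiag k.+1 = - Ddiag k / 4.
Proof. by rewrite /Ddiag doubleS !exprS; field; rewrite expf_neq0. Qed.

Lemma rowS_adj_Ddiag f :
  rowS_adj (fun k => f k * Ddiag k) =1 (fun k => rowS f k * Ddiag k).
Proof.
rewrite /rowS_adj /rowS => -[|k] /=; rewrite !DdiagS; first by field.
by rewrite exprS; field.
Qed.

Lemma rowS_adj_Linv_ones : rowS_adj Linv_ones =1 Linv_ones.
Proof.
move=> k; rewrite /rowS_adj.
case: (even_or_odd k) => [[j ->]|[j ->]].
- have -> : shiftr Linv_ones j.*2 = 0.
    by case: j => [|j] //; rewrite /Linv_ones doubleS /= odd_double mul0r.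
  by rewrite sign_double /Linv_ones /= odd_double /=; ring.
- by rewrite /Linv_ones /= odd_double /= !exprS; field; rewrite expf_neq0.
Qed.

Lemma prod_Ddiag n : \prod_(k < n) Ddiag k = (-1) ^+ 'C(n, 2) / 2 ^+ (n ^ 2).
Proof. by rewrite prodf_div !prodrXr sum_odd -bin2_sum big_mkord. Qed.

Lemma sum_Linv_ones_Ddiag n :
  \sum_(k < n) Linv_ones k * (Linv_ones k / Ddiag k) = (2 * ceilhalf n)%:R.
Proof.
have term k : Linv_ones k * (Linv_ones k / Ddiag k) = 2 * (~~ odd k)%:R.
  rewrite /Linv_ones /Ddiag -signr_odd; case: (odd k) => /=; first by rewrite !mul0r mulr0.
  rewrite expr0 exprS -addnn exprD.
  have p_neq0 : (2 : rat) ^+ k != 0 by rewrite expf_neq0.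
  by field.
elim: n => [|n IH]; first by rewrite big_ord0.
rewrite big_ord_recr /= IH term -natrM -natrD /ceilhalf /= uphalf_half.
by case: (odd n) => /=; congr _%:R; lia.
Qed.

(* The integer exponent avoids truncated subtraction: for j > r the binomial
   vanishes, so no case split on j <= r is needed. *)
Definition lcoef (r j : nat) : rat := 'C(r.*2.+1, r + j.+1)%:R * 4 ^ (j%:Z - r%:Z).

Lemma lcoefSS r j :
  lcoef r.+1 j.+1 = lcoef r j + lcoef r j.+1 / 2 + lcoef r j.+2 / 16.
Proof.
rewrite /lcoef (_ : j.+1%:Z - r.+1%:Z = j%:Z - r%:Z); last by lia.
rewrite (_ : j.+2%:Z - r%:Z = j%:Z - r%:Z + 1 + 1); last by lia.
rewrite (_ : j.+1%:Z - r%:Z = j%:Z - r%:Z + 1); last by lia.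
rewrite !expfzSr // doubleS !addnS binSS natrD natrD natrM.
by field.
Qed.

Lemma lcoefS0 r : lcoef r.+1 0 = 3 / 4 * lcoef r 0 + lcoef r 1 / 16.
Proof.
rewrite /lcoef (_ : 0%:Z - r%:Z = - r.+1%:Z + 1); last by lia.
rewrite (_ : 1%:Z - r%:Z = - r.+1%:Z + 1 + 1); last by lia.
rewrite (_ : 0%:Z - r.+1%:Z = - r.+1%:Z); last by lia.
rewrite !expfzSr // doubleS !addnS !addn0 binSS bin_odd_mid natrD natrD natrM.
by field.
Qed.

Lemma lcoef0 r : lcoef r 0 = 2 * cbin r.+1.
Proof.
rewrite /lcoef /cbin sub0r -exprnN addn1 exp2_double doubleS [in RHS]binS bin_odd_mid.
by rewrite natrD exprS; field; rewrite expf_neq0.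
Qed.

Definition Lentry (i k : nat) : rat :=
  if ~~ odd k then lcoef i./2 k./2
  else if odd i then lcoef i./2 k./2 - lcoef i./2 k./2.+1 / 4 else 0.

Lemma Lentry_ee r j : Lentry r.*2 j.*2 = lcoef r j.
Proof. by rewrite /Lentry odd_double !doubleK. Qed.

Lemma Lentry_oe r j : Lentry r.*2.+1 j.*2 = lcoef r j.
Proof. by rewrite /Lentry odd_double /= uphalf_double doubleK. Qed.

Lemma Lentry_eo r j : Lentry r.*2 j.*2.+1 = 0.
Proof. by rewrite /Lentry /= !odd_double. Qed.

Lemma Lentry_oo r j : Lentry r.*2.+1 j.*2.+1 = lcoef r j - lcoef r j.+1 / 4.
Proof. by rewrite /Lentry /= !odd_double /= !uphalf_double. Qed.

Lemma LentryS i : Lentry i.+1 =1 rowS (Lentry i).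
Proof.
move=> k; rewrite /rowS.
case: (even_or_odd i) => [[r ->]|[r ->]]; case: (even_or_odd k) => [[j ->]|[j ->]].
- rewrite Lentry_oe sign_double Lentry_ee Lentry_eo.
  by case: j => [|j]; rewrite ?doubleS /= ?Lentry_eo; ring.
- by rewrite Lentry_oo sign_doubleS Lentry_eo /= -doubleS !Lentry_ee; ring.
- rewrite -doubleS Lentry_ee sign_double Lentry_oe Lentry_oo.
  case: j => [|j] /=; first by rewrite lcoefS0; field.
  by rewrite Lentry_oo lcoefSS; field.
- by rewrite sign_doubleS Lentry_oo /= -!doubleS Lentry_eo !Lentry_oe; ring.
Qed.

Lemma Lentry0 k : Lentry 0 k = (k == 0)%:R.
Proof.
case: (even_or_odd k) => [[j ->]|[j ->]]; last by rewrite (Lentry_eo 0).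
case: j => [|j]; rewrite (Lentry_ee 0) /lcoef; first by rewrite subrr expr0z mulr1.
by rewrite bin_small ?mul0r.
Qed.

Lemma Lentry_gt i k : (i < k)%N -> Lentry i k = 0.
Proof.
elim: i k => [|i IH] k lt_ik; first by rewrite Lentry0; case: k lt_ik.
rewrite LentryS /rowS !IH ?mulr0 ?mul0r ?subr0 ?addr0; try lia.
by case: k lt_ik => //= k lt_ik; rewrite IH.
Qed.

Lemma Lentry_diag i : Lentry i i = 1.
Proof.
elim: i => [|i IH]; first by rewrite Lentry0.
by rewrite LentryS /rowS /= IH !Lentry_gt ?mulr0 ?mul0r ?subr0 ?addr0.
Qed.

Lemma Lentry_first_col m : Lentry m 0 = 2 * moment m.
Proof.
rewrite /moment /ceilhalf; case: (even_or_odd m) => [[r ->]|[r ->]].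
  by rewrite (Lentry_ee r 0) lcoef0 /= doubleK.
by rewrite (Lentry_oe r 0) lcoef0 /= uphalf_double.
Qed.

Lemma dot_Lentry0 n g : (0 < n)%N -> dot n (Lentry 0) g = g 0.
Proof.
case: n => // n _; rewrite /dot big_ord_recl Lentry0 mul1r big1 ?addr0 // => k _.
by rewrite Lentry0 mul0r.
Qed.

Lemma dot_LentryS n i g : (i.+1 < n)%N ->
  dot n (Lentry i.+1) g = dot n (Lentry i) (rowS_adj g).
Proof.
move=> lt_in; rewrite -dot_rowS => [|k le_nk]; last by rewrite Lentry_gt //; lia.
by apply: eq_bigr => k _; rewrite LentryS.
Qed.

Lemma dot_Lentry_Linv_ones n i : (i < n)%N -> dot n (Lentry i) Linv_ones = 1.
Proof.
elim: i => [|i IH] lt_in; first by rewrite dot_Lentry0.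
by rewrite dot_LentryS // (eq_dotr _ _ rowS_adj_Linv_ones) IH // ltnW.
Qed.

Lemma dot_Lentry_Ddiag n i j : (i < n)%N ->
  dot n (Lentry i) (fun k => Lentry j k * Ddiag k) = moment (i + j).
Proof.
elim: i j => [|i IH] j lt_in.
  by rewrite dot_Lentry0 // Lentry_first_col /Ddiag; field.
rewrite dot_LentryS // (eq_dotr _ _ (rowS_adj_Ddiag _)).
rewrite (@eq_dotr _ _ _ (fun k => Lentry j.+1 k * Ddiag k)) => [|k]; last by rewrite LentryS.
by rewrite IH ?addnS // ltnW.
Qed.

Definition Lmx n : 'M[rat]_n := \matrix_(i, k) Lentry i k.

Lemma det_Lmx n : \det (Lmx n) = 1.
Proof.
rewrite det_trig; last by apply/is_trig_mxP => i j lt_ij; rewrite mxE Lentry_gt.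
by apply: big1 => i _; rewrite mxE Lentry_diag.
Qed.

Lemma Lmx_Linv_ones n : Lmx n *m \col_k Linv_ones k = const_mx 1.
Proof.
apply/matrixP => i j; rewrite !mxE -(dot_Lentry_Linv_ones (ltn_ord i)).
by apply: eq_bigr => k _; rewrite !mxE.
Qed.

Lemma Lmx_LDLt n :
  Lmx n *m diag_mx (\row_k Ddiag k) *m (Lmx n)^T = \matrix_(i, j) moment (i + j).
Proof.
apply/matrixP => i j; rewrite mul_mx_diag !mxE -(dot_Lentry_Ddiag j (ltn_ord i)).
by apply: eq_bigr => k _; rewrite !mxE -mulrA [Ddiag k * _]mulrC.
Qed.

Theorem mainTheorem10 (n : nat) (hn : (0 < n)%N) :
  \det (\matrix_(i < n, j < n) entry i j) =
  ((-1) ^+ 'C(n, 2) / (2%:R ^+ (n ^ 2)) : rat) *: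
    ((2 * ceilhalf n)%:R *: 'X + 1).
Proof.
pose P := map_mx polyC (Lmx n).
pose D := map_mx polyC (diag_mx (\row_(k < n) Ddiag k)).
pose zc := map_mx polyC (\col_(k < n) Linv_ones k).
pose q := map_mx polyC (\col_(k < n) (Linv_ones k / Ddiag k)).
have Dq : D *m q = zc.
  rewrite -map_mxM; congr map_mx; apply/matrixP => i j.
  by rewrite mul_diag_mx !mxE mulrC divfK ?Ddiag_neq0.
have Pz : P *m zc = const_mx 1 by rewrite -map_mxM Lmx_Linv_ones map_const_mx rmorph1.
have PDP : P *m D *m P^T = map_mx polyC (\matrix_(i < n, j < n) moment (i + j)).
  by rewrite map_trmx -!map_mxM Lmx_LDLt.
have -> : \matrix_(i < n, j < n) entry i j = P *m (D *m (1%:M + ('X *: q) *m zc^T)) *m P^T.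
  rewrite mulmxDr mulmx1 -scalemxAl -scalemxAr mulmxA Dq mulmxDr mulmxDl.
  rewrite -scalemxAr -scalemxAl mulmxA -[P *m zc *m zc^T *m P^T]mulmxA -trmx_mul.
  by rewrite PDP Pz; apply/matrixP => i j; rewrite !mxE big_ord1 !mxE !mulr1 addrC.
rewrite !det_mulmx det_tr det_map_mx det_Lmx rmorph1 mul1r mulr1 det_1Dmul.
rewrite det_map_mx det_diag -scalemxAr mxE map_trmx -map_mxM mxE.
rewrite (eq_bigr (fun k : 'I_n => Ddiag k)) => [|k _]; last by rewrite mxE.
rewrite prod_Ddiag mxE (eq_bigr (fun k : 'I_n => Linv_ones k * (Linv_ones k / Ddiag k))).
  by rewrite sum_Linv_ones_Ddiag -!mul_polyC rmorph_nat; ring.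
by move=> k _; rewrite !mxE.
Qed.
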